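(* Assume the weak form of Szpiro's conjecture. Let $u\geq 1$ be a positive integer, $r\geq1$, and $A_1,\dots,A_r$ fixed positive integers. Then the equation $$\prod_{i=1}^r A_i^{n_i}n_i! = x^2-u^2$$ has only finitely many solutions $(n_1,\dots,n_r,x)$ in positive integers $n_1,\dots,n_r$ and integers $x$.
   Context: For a nonzero integer $a$, $N(a)=\prod_{p\mid a}p$ is its radical. Weak form of Szpiro's conjecture: there exists a constant $s>0$ such that for all pairwise coprime nonzero integers $A,B,C$ with $A+B=C$ one has $|ABC|<N(ABC)^{s}$. *)

From Stdlib Require Import Reals.
From mathcomp Require Import all_boot all_order all_algebra.
Set Implicit Arguments. Unset Strict Implicit. Unset Printing Implicit Defensive.
Import Order.TTheory GRing.Theory Num.Theory.
Local Open Scope ring_scope.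

Definition radical (a : int) : nat := (\prod_(p <- primes (absz a)) p)%N.

Definition szpiro_weak : Prop :=
  exists s : R, Rlt R0 s /\
    forall A B C : int,
      A != 0 -> B != 0 -> C != 0 ->
      coprimez A B -> coprimez A C -> coprimez B C ->
      A + B = C ->
      Rlt (INR (absz (A * B * C))) (Rpower (INR (radical (A * B * C))) s).

From Stdlib Require Import Reals Lra Lia.
From mathcomp Require Import all_boot all_order all_algebra zify ring.

(* Let P := prod_i A_i^n_i n_i! and N := max_i n_i, so that N! <= P and every
   prime factor of P divides prod_i A_i or is at most N.  Writing
   P = x^2 - u^2 = t (t + 2u) with t = |x| - u and dividing t and 2u by their
   gcd gives a coprime triple a + b = c with P <= 4u^2 abc and rad(abc)
   dividing 2u (prod_i A_i) rad(N!).  Szpiro gives abc < rad(abc)^S, and since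
   rad(N!) <= 8^N this yields N! <= C D^N for constants C, D depending only on
   u, A and S.  Hence N, and then x, is bounded. *)

Lemma prime_dvd_fact p n : prime p -> (p %| n`!) = (p <= n).
Proof.
move=> pr_p; apply/idP/idP => [|le_pn]; last by rewrite dvdn_fact ?prime_gt0.
elim: n => [|n IHn]; first by rewrite Euclid_dvd1.
rewrite factS Euclid_dvdM // => /orP[/dvdn_leq-> // | /IHn]; exact: leqW.
Qed.

Lemma prod_uniq_primes_dvd (s : seq nat) m :
  uniq s -> all prime s -> (forall p, p \in s -> p %| m) -> \prod_(p <- s) p %| m.
Proof.
elim: s => [|q s IHs] /=; first by rewrite big_nil dvd1n.
move=> /andP[q_s uniq_s] /andP[pr_q pr_s] dvd_s.
rewrite big_cons Gauss_dvd.
  by rewrite dvd_s ?mem_head // IHs // => p s_p; rewrite dvd_s // in_cons s_p orbT.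
rewrite prime_coprime // Euclid_dvd_prod // big_has; apply/hasPn => p s_p /=.
rewrite dvdn_prime2 //; last exact: (allP pr_s).
by apply: contraNneq q_s => ->.
Qed.

Definition radn (m : nat) : nat := \prod_(p <- primes m) p.

Lemma radn_gt0 m : 0 < radn m.
Proof. by rewrite /radn big_seq prodn_cond_gt0 // => p; rewrite mem_primes => /and3P[/prime_gt0]. Qed.

Lemma radn_dvd m M : (forall p, prime p -> p %| m -> p %| M) -> radn m %| M.
Proof.
move=> dvd_M; apply: prod_uniq_primes_dvd; first exact: primes_uniq.
  by apply/allP => p; rewrite mem_primes => /andP[].
by move=> p; rewrite mem_primes => /and3P[pr_p _]; apply: dvd_M.
Qed.

Lemma dvdn_radn p m : prime p -> 0 < m -> p %| m -> p %| radn m.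
Proof.
move=> pr_p m_gt0 p_m; have m_p : p \in primes m by rewrite mem_primes pr_p m_gt0.
by rewrite /radn (perm_big _ (perm_to_rem m_p)) big_cons dvdn_mulr.
Qed.

Lemma bin_leq_exp2 n k : 'C(n, k) <= 2 ^ n.
Proof.
elim: n k => [|n IHn] [|k] //=; first by rewrite bin0 expn_gt0.
by rewrite binS expnS mul2n -addnn leq_add.
Qed.

(* The primes in (k + 1, 2k + 1] divide C(2k + 1, k), which is at most 2^(2k+1). *)
Lemma radn_fact_odd k : radn (k.*2.+1)`! %| radn k.+1`! * 'C(k.*2.+1, k).
Proof.
apply: radn_dvd => p pr_p; rewrite prime_dvd_fact // => le_p.
have [le_pk | lt_kp] := leqP p k.+1.
  by rewrite dvdn_mulr // dvdn_radn ?fact_gt0 ?prime_dvd_fact.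
apply: dvdn_mull; have : p %| (k.*2.+1)`! by rewrite prime_dvd_fact.
rewrite -(@bin_fact _ k); last by rewrite -addnn leqW ?leq_addr.
rewrite !Euclid_dvdM // !prime_dvd_fact //; move: le_p lt_kp.
by case: leqP; case: leqP; rewrite ?orbF //=; lia.
Qed.

Lemma radn_fact_even k : 0 < k -> radn (k.*2.+2)`! %| radn (k.*2.+1)`!.
Proof.
move=> k_gt0; apply: radn_dvd => p pr_p; rewrite prime_dvd_fact // => le_p.
apply: dvdn_radn; rewrite ?fact_gt0 ?prime_dvd_fact //.
rewrite leq_eqVlt in le_p; case/orP: le_p => [/eqP def_p|//].
have : 2 %| p by rewrite def_p -doubleS -mul2n dvdn_mulr.
by rewrite dvdn_prime2 // => /eqP; lia.
Qed.

Lemma radn_fact_leq n : radn n`! <= 8 ^ n.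
Proof.
elim/ltn_ind: n => n IHn; have := odd_double_half n.
case: (odd n); case: n./2 => [|k] /= def_n; rewrite -def_n ?add0n ?add1n.
- by rewrite /radn /= big_nil.
- apply: leq_trans (dvdn_leq _ (radn_fact_odd k.+1)) _.
    by rewrite muln_gt0 radn_gt0 bin_gt0 leqW ?leq_addr // -addnn leq_addr.
  apply: leq_trans (leq_mul (IHn k.+2 _) (bin_leq_exp2 _ _)) _; first by lia.
  by rewrite -[8]/(2 ^ 3) -!expnM -expnD leq_exp2l //; lia.
- by rewrite /radn /= big_nil.
- case: k def_n => [|k] def_n; first by rewrite /radn /= (_ : primes 2 = [:: 2]) ?big_seq1.
  rewrite (_ : k.+2.*2 = k.+1.*2.+2) //.
  apply: leq_trans (dvdn_leq (radn_gt0 _) (radn_fact_even k.+1 isT)) _.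
  by apply: leq_trans (IHn _ _) _; rewrite ?leq_exp2l //; lia.
Qed.

Lemma leq_expn2r m n e : m <= n -> m ^ e <= n ^ e.
Proof. by move=> le_mn; elim: e => // e IHe; rewrite !expnS leq_mul. Qed.

Lemma leq_exp_mul_fact D T k : D <= T.+1 -> D ^ k * T`! <= (T + k)`!.
Proof.
move=> le_DT; elim: k => [|k IHk]; first by rewrite addn0 mul1n.
by rewrite addnS factS expnS -mulnA leq_mul // (leq_trans le_DT) // ltnS leq_addr.
Qed.

Lemma exp_lt_fact_eventually C D : exists B, forall N, B <= N -> C * D ^ N < N`!.
Proof.
pose T := 2 * D.+1; exists (T + (C * D.+1 ^ T).+1) => N le_BN.
have [k def_N] : exists k, N = T + k by exists (N - T); lia.
have lt_C2k : C * D.+1 ^ T < 2 ^ k by apply: leq_ltn_trans _ (ltn_expl k (ltnSn 1)); lia.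
apply: (@leq_ltn_trans (C * D.+1 ^ N)); first by rewrite leq_mul2l leq_expn2r ?orbT.
apply: (@leq_trans (T ^ k * T`!)); last by rewrite def_N leq_exp_mul_fact.
apply: leq_trans (leq_pmulr _ (fact_gt0 _)).
by rewrite def_N expnD mulnA /T expnMn ltn_pmul2r ?expn_gt0.
Qed.

Lemma INR_expn m n : INR (m ^ n) = pow (INR m) n.
Proof. by elim: n => // n IHn; rewrite expnS mult_INR IHn. Qed.

Definition abc_exponent (S : nat) : Prop :=
  forall a b c : nat, 0 < a -> 0 < b -> coprime a b -> a + b = c ->
    a * b * c < radn (a * b * c) ^ S.

Lemma szpiro_abc_exponent : szpiro_weak -> exists S, abc_exponent S.
Proof.
case=> s [s_gt0 szpiro]; have [lt_s_up _] := archimed s.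
have up_gt0 : Z.lt 0 (up s) by apply: lt_0_IZR; lra.
exists (Z.to_nat (up s)) => a b c a_gt0 b_gt0 co_ab def_c.
have c_gt0 : 0 < c by rewrite -def_c addn_gt0 a_gt0.
have co_ac : coprime a c by rewrite -def_c /coprime gcdnDl.
have co_bc : coprime b c by rewrite -def_c /coprime gcdnDr gcdnC.
have := szpiro a b c; rewrite !coprimezE /= -!PoszM /= -PoszD def_c.
move=> /(_ _ _ _ co_ab co_ac co_bc erefl); rewrite !lt0n in a_gt0 b_gt0 c_gt0.
move=> /(_ a_gt0 b_gt0 c_gt0) lt_abc.
have rad_ge1 : Rle 1 (INR (radn (a * b * c))).
  by apply: (le_INR 1); apply/ssrnat.leP; apply: radn_gt0.
have := Rle_Rpower _ s (INR (Z.to_nat (up s))) rad_ge1.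
rewrite Rpower_pow; last by lra.
rewrite -INR_expn => le_pow; apply/ssrnat.ltP; apply: INR_lt.
apply: (Rlt_le_trans _ _ _ lt_abc (le_pow _)).
rewrite INR_IZR_INZ Znat.Z2Nat.id; [lra | lia].
Qed.

(* With t := y - u we have P = t (t + 2u); removing d := gcd(t, 2u) from
   t and 2u leaves a coprime pair a, b with P = d^2 a (a + b) and d <= 2u. *)
Lemma shifted_square_abc u P y : 0 < u -> 0 < P -> P + u * u = y * y ->
  exists a b, [/\ 0 < a, 0 < b, coprime a b, P <= 4 * u * u * (a * b * (a + b))
    & forall p, prime p -> p %| a * b * (a + b) -> p %| 2 * u \/ p %| P].
Proof.
move=> u_gt0 P_gt0 def_P.
have lt_uy : u < y by rewrite ltnNge; apply/negP => le_yu; have := leq_mul le_yu le_yu; lia.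
pose t := y - u; have t_gt0 : 0 < t by rewrite subn_gt0.
have def_Pt : P = t * (t + 2 * u).
  by apply/eqP; rewrite -(eqn_add2r (u * u)) def_P /t; apply/eqP; nia.
pose d := gcdn t (2 * u); have d_gt0 : 0 < d by rewrite gcdn_gt0 t_gt0.
have le_d2u : d <= 2 * u by rewrite dvdn_leq ?muln_gt0 ?dvdn_gcdr.
have /dvdnP[a def_t] : d %| t by apply: dvdn_gcdl.
have /dvdnP[b def_2u] : d %| 2 * u by apply: dvdn_gcdr.
have a_gt0 : 0 < a by move: t_gt0; rewrite def_t muln_gt0 => /andP[].
have b_gt0 : 0 < b by move: u_gt0; rewrite -(ltn_pmul2l (isT : 0 < 2)) def_2u muln_gt0 => /andP[].
have def_Pab : P = (d * d) * (a * (a + b)) by rewrite def_Pt def_2u def_t; ring.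
exists a, b; split=> //.
- by rewrite /coprime -(eqn_pmul2r d_gt0) muln_gcdl -def_t -def_2u mul1n.
- rewrite def_Pab (_ : 4 * u * u = 2 * u * (2 * u)); last by ring.
  by rewrite leq_mul ?leq_mul ?leq_pmulr.
move=> p pr_p p_abc; have : [|| p %| a, p %| b | p %| a + b] by rewrite orbA -!Euclid_dvdM.
case/or3P => [p_a | p_b | p_ab].
- by right; rewrite def_Pt def_t dvdn_mulr ?dvdn_mulr.
- by left; rewrite def_2u dvdn_mulr.
- by right; rewrite def_Pt def_2u def_t -mulnDl dvdn_mull ?dvdn_mulr.
Qed.

Lemma fact_bound_of_abc S u K : abc_exponent S -> 0 < u -> 0 < K ->
  exists B, forall y P N, P + u * u = y * y -> 0 < P -> N`! <= P ->
    (forall p, prime p -> p %| P -> p %| K \/ p <= N) -> N < B.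
Proof.
move=> abcS u_gt0 K_gt0.
have [B lt_fact] := exp_lt_fact_eventually (4 * u * u * (2 * u * K) ^ S) (8 ^ S).
exists B => y P N def_P P_gt0 le_fact_P primes_P; rewrite ltnNge; apply/negP.
move=> /lt_fact; apply/negP; rewrite -leqNgt.
have [a [b [a_gt0 b_gt0 co_ab le_P prime_abc]]] := shifted_square_abc _ _ _ u_gt0 P_gt0 def_P.
have rad_abc : radn (a * b * (a + b)) <= 2 * u * K * radn N`!.
  apply: dvdn_leq; first by rewrite !muln_gt0 u_gt0 K_gt0 radn_gt0.
  apply: radn_dvd => p pr_p /(prime_abc p pr_p) [p_2u | /(primes_P p pr_p) [p_K | le_pN]].
  - by rewrite -mulnA dvdn_mulr.
  - by rewrite mulnAC dvdn_mull.
  - by rewrite dvdn_mull // dvdn_radn ?fact_gt0 ?prime_dvd_fact.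
apply: (leq_trans le_fact_P); apply: (leq_trans le_P).
rewrite -[_ * (8 ^ S) ^ N]mulnA leq_mul2l; apply/orP; right.
apply: ltnW; apply: (leq_trans (abcS a b _ a_gt0 b_gt0 co_ab erefl)).
have -> : (8 ^ S) ^ N = (8 ^ N) ^ S by rewrite -!expnM mulnC.
by rewrite -expnMn leq_expn2r // (leq_trans rad_abc) // leq_mul2l radn_fact_leq orbT.
Qed.

Lemma fact_bigmax_dvd_prod {I : finType} (A n : I -> nat) :
  (\max_i n i)`! %| \prod_i (A i ^ n i * (n i)`!).
Proof.
elim/big_rec2: _ => // i P M _ fact_M_P.
have [_ | _] := leqP (n i) M; first by rewrite dvdn_mull.
by rewrite dvdn_mulr // dvdn_mull.
Qed.

Lemma prime_dvd_prod_exp_fact {I : finType} (A n : I -> nat) p : prime p ->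
  p %| \prod_i (A i ^ n i * (n i)`!) -> p %| \prod_i A i \/ p <= \max_i n i.
Proof.
move=> pr_p; rewrite Euclid_dvd_prod // big_orE => /existsP[i].
rewrite Euclid_dvdM // Euclid_dvdX // prime_dvd_fact // => /orP[/andP[p_A _] | le_p].
  by left; rewrite (bigD1 i) //= dvdn_mulr.
by right; apply: leq_trans le_p (leq_bigmax i).
Qed.

Import Order.TTheory GRing.Theory Num.Theory.
Local Open Scope ring_scope.

Lemma bounded_ffun_int_pairs (I : finType) (B X : nat) :
  exists s : seq ({ffun I -> nat} * int),
    forall (n : {ffun I -> nat}) (x : int),
      (forall i, n i < B)%N -> (`|x| <= X)%N -> (n, x) \in s.
Proof.
exists [seq (f, x) | f <- [seq [ffun i => val (g i)] | g : {ffun I -> 'I_B}],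
                     x <- [seq k%:Z - X%:Z | k <- iota 0 (2 * X).+1]].
move=> n x lt_nB le_xX; apply/allpairsP; exists ([ffun i => n i], x); split.
- apply/mapP; exists [ffun i => Ordinal (lt_nB i)]; first by rewrite mem_enum.
  by apply/ffunP => i; rewrite !ffunE.
- apply/mapP; exists (absz (x + X%:Z)); rewrite ?mem_iota /=; lia.
- by congr (_, _); apply/ffunP => i; rewrite /= ffunE.
Qed.

Theorem theorem3 (H : szpiro_weak) (u r : nat) (hu : (1 <= u)%N) (hr : (1 <= r)%N)
    (A : 'I_r -> nat) (hA : forall i, (0 < A i)%N) :
  exists sols : seq ({ffun 'I_r -> nat} * int),
    forall (n : {ffun 'I_r -> nat}) (x : int),
      (forall i, (0 < n i)%N) ->
      (\prod_(i < r) (A i ^ n i * (n i)`!))%N%:Z = x ^+ 2 - (u%:Z) ^+ 2 ->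
      (n, x) \in sols.
Proof.
have [S abcS] := szpiro_abc_exponent H.
have K_gt0 : (0 < \prod_(i < r) A i)%N by rewrite prodn_gt0.
have [B lt_max_B] := fact_bound_of_abc _ _ _ abcS hu K_gt0.
pose X := (\prod_(i < r) (A i ^ B * B`!) + u * u)%N.
have [sols mem_sols] := bounded_ffun_int_pairs 'I_r B X.
exists sols => n x n_gt0 def_P; set P := (\prod_(i < r) _)%N in def_P.
have sqr_x : (P + u * u = `|x| * `|x|)%N.
  apply/eqP; rewrite -eqz_nat PoszD PoszM def_P -expr2 subrK PoszM abszE.
  by rewrite -normrM -expr2 ger0_norm ?sqr_ge0.
have P_gt0 : (0 < P)%N.
  by rewrite prodn_gt0 // => i; rewrite muln_gt0 expn_gt0 hA fact_gt0.
have le_fact_P : ((\max_(i < r) n i)`! <= P)%N.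
  exact: dvdn_leq P_gt0 (fact_bigmax_dvd_prod A n).
have lt_nB i : (n i < B)%N.
  apply: leq_ltn_trans (leq_bigmax i) (lt_max_B _ _ _ sqr_x P_gt0 le_fact_P _).
  exact: prime_dvd_prod_exp_fact.
have le_P : (P <= \prod_(i < r) (A i ^ B * B`!))%N.
  by apply: leq_prod => i _; rewrite leq_mul ?leq_pexp2l ?leq_fact // ltnW.
apply: mem_sols => //; apply: (@leq_trans (absz x * absz x)).
  by case: (absz x) => // m; rewrite leq_pmulr.
by rewrite -sqr_x leq_add2r.
Qed.
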